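(* For $i\in\{1,2\}$, let $G_i$ be a 2-edge-connected $(3,4)$-biregular $X_i,Y_i$-bigraph (vertices of $X_i$ of degree 3, of $Y_i$ of degree 4), with $G_1,G_2$ vertex-disjoint, having a $P_7$-factor $F_i$, and choose an edge $e_i=a_ib_i\in E(G_i)\setminus E(F_i)$ with $a_i\in X_i$, $b_i\in Y_i$. Let $G$ be the graph obtained from the disjoint union $G_1\cup G_2$ by deleting $e_1$ and $e_2$ and adding the edges $e_1'=a_1b_2$ and $e_2'=a_2b_1$, so that $G$ is a $(3,4)$-biregular $(X_1\cup X_2),(Y_1\cup Y_2)$-bigraph. If $G_1$ has no full 3-regular subgraph, then $G$ is a 2-edge-connected $(3,4)$-biregular bigraph having a $P_7$-factor but no full 3-regular subgraph.
   Context: Graphs may have multiple edges. An $X,Y$-bigraph is a bipartite graph with partite sets $X$ and $Y$. A $(3,4)$-biregular bigraph is a bipartite graph in which every vertex of one part has degree 3 and every vertex of the other part has degree 4. A $P_7$-factor is a spanning subgraph each of whose components is a path on 7 vertices. A full 3-regular subgraph of a $(3,4)$-biregular bigraph is a 3-regular subgraph that contains every vertex of degree 4. *)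

From mathcomp Require Import all_boot.
Set Implicit Arguments. Unset Strict Implicit. Unset Printing Implicit Defensive.

(* Parallel edges are
   allowed (E is an arbitrary finite type of edge names). *)
Record bigraph := BiGraph {
  bX : finType; bY : finType; bE : finType;
  bex : bE -> bX; bey : bE -> bY }.

Definition vtx (G : bigraph) : finType := (bX G + bY G)%type.

Definition incid (G : bigraph) (e : bE G) (v : vtx G) : bool :=
  (inl (bex e) == v) || (inr (bey e) == v).

Definition joins (G : bigraph) (e : bE G) (u v : vtx G) : bool :=
  ((inl (bex e) == u) && (inr (bey e) == v)) ||
  ((inl (bex e) == v) && (inr (bey e) == u)).

Definition degS (G : bigraph) (S : {set bE G}) (v : vtx G) : nat :=
  #|[set e in S | incid e v]|.

Definition deg (G : bigraph) (v : vtx G) : nat := degS [set: bE G] v.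

Definition biregular34 (G : bigraph) : Prop :=
  (forall x : bX G, deg (inl x : vtx G) = 3) /\
  (forall y : bY G, deg (inr y : vtx G) = 4).

Definition adjS (G : bigraph) (S : {set bE G}) : rel (vtx G) :=
  fun u v => [exists e in S, joins e u v].

Definition connectedS (G : bigraph) (S : {set bE G}) : Prop :=
  forall u v : vtx G, connect (adjS S) u v.

Definition two_edge_connected (G : bigraph) : Prop :=
  connectedS [set: bE G] /\ forall e : bE G, connectedS ([set: bE G] :\ e).

(* F is a P_7-factor: the component of (V(G), F) containing any vertex v is a
   path on 7 vertices p_0 ... p_6 (distinct) whose edges are exactly
   f 0, ..., f 5, f i joining p_i and p_{i+1}. *)
Definition P7_factor (G : bigraph) (F : {set bE G}) : Prop :=
  forall v : vtx G,
  exists (p : 7.-tuple (vtx G)) (f : 'I_6 -> bE G),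
    [/\ uniq p, v \in p, injective f,
        (forall i : 'I_6, f i \in F /\
           joins (f i) (tnth p (widen_ord (leqnSn 6) i)) (tnth p (lift ord0 i)))
      & (forall e, e \in F -> has (incid e) p -> exists i, e = f i)].

Definition has_P7_factor (G : bigraph) : Prop := exists F : {set bE G}, P7_factor F.

(* a full 3-regular subgraph: a subgraph (W, S), 3-regular, containing
   every vertex of degree 4 (i.e. every vertex of Y) *)
Definition has_full_3reg_subgraph (G : bigraph) : Prop :=
  exists (W : {set vtx G}) (S : {set bE G}),
    [/\ (forall e, e \in S -> (inl (bex e) : vtx G) \in W /\ (inr (bey e) : vtx G) \in W),
        (forall v, v \in W -> degS S v = 3)
      & (forall y : bY G, (inr y : vtx G) \in W)].

(* The graph G of the theorem, built on the disjoint union of G1 and G2: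
   the edge e1 = a1 b1 is replaced by e1' = a1 b2 and e2 = a2 b2 by
   e2' = a2 b1 (we reuse the names e1, e2 for the new edges e1', e2'). *)
Definition swap_ey (G1 G2 : bigraph) (e1 : bE G1) (e2 : bE G2)
  (e : (bE G1 + bE G2)%type) : (bY G1 + bY G2)%type :=
  match e with
  | inl e => if e == e1 then inr (bey e2) else inl (bey e)
  | inr e => if e == e2 then inl (bey e1) else inr (bey e)
  end.

Definition swap_ex (G1 G2 : bigraph)
  (e : (bE G1 + bE G2)%type) : (bX G1 + bX G2)%type :=
  match e with
  | inl e => inl (bex e)
  | inr e => inr (bex e)
  end.

Definition glue (G1 G2 : bigraph) (e1 : bE G1) (e2 : bE G2) : bigraph :=
  @BiGraph (bX G1 + bX G2)%type (bY G1 + bY G2)%type (bE G1 + bE G2)%type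
           (@swap_ex G1 G2) (swap_ey e1 e2).

From mathcomp Require Import all_boot zify.
Set Implicit Arguments. Unset Strict Implicit. Unset Printing Implicit Defensive.

(* Write e1' = a1 b2 and e2' = a2 b1 for the new edges, so that G1 - e1 and G2 - e2 embed
   in G.  Every a_i, b_i trades one edge for another, so degrees are unchanged, and since
   e_i is not in F_i the P7-factors F1 and F2 together form one of G.
   2-edge-connectivity: as glue e1 e2 is isomorphic to glue e2 e1, the deleted edge may be
   taken on the G1 side.  G2 - e2 stays connected and b1 reaches it through e2'; after
   deleting the edge and e1, every vertex of G1 still reaches a1 or b1 inside G1, and a1
   reaches G2 through e1' (or, if e1' is the deleted edge, reaches b1 inside G1 - e1).
   No full 3-regular subgraph: if S is one in G, let S1 be its edges on the G1 side, with
   e1' read back as e1.  Counted at X1, |S1| is a multiple of 3; counted at Y1, it is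
   3|Y1| + [e1' in S] - [e2' in S].  So e1' and e2' are both in S or both out of it, and
   S1 is a full 3-regular subgraph of G1. *)

Lemma sum_andb_eq (T : finType) (b : bool) (a : T) : \sum_(t : T) (b && (a == t)) = b.
Proof.
rewrite (bigD1 a) //= eqxx andbT big1 ?addn0 // => t.
by rewrite eq_sym => /negbTE->; rewrite andbF.
Qed.

Section Incidence.
Variable G : bigraph.
Implicit Types (S : {set bE G}) (e d : bE G) (u v : vtx G).

Lemma incidX e x : incid e (inl x) = (bex e == x).
Proof. by rewrite /incid /= orbF. Qed.

Lemma incidY e y : incid e (inr y) = (bey e == y).
Proof. by []. Qed.

Lemma joinsC e u v : joins e u v = joins e v u.
Proof. by rewrite /joins orbC. Qed.

Lemma degSE S v : degS S v = \sum_(e in S | incid e v) 1.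
Proof. by rewrite sum1_card /degS; apply: eq_card => e; rewrite inE. Qed.

Lemma degS_sum S v : degS S v = \sum_e ((e \in S) && incid e v).
Proof. by rewrite degSE big_mkcond /=; apply: eq_bigr => e _; case: (_ && _). Qed.

Lemma sum_degSX S : \sum_(x : bX G) degS S (inl x) = #|S|.
Proof.
rewrite -(sum1_card (mem S)) (partition_big (@bex G) xpredT) //=.
by apply: eq_bigr => x _; rewrite degSE; apply: eq_bigl => e; rewrite incidX.
Qed.

Lemma sum_degSY S : \sum_(y : bY G) degS S (inr y) = #|S|.
Proof.
rewrite -(sum1_card (mem S)) (partition_big (@bey G) xpredT) //=.
by apply: eq_bigr => y _; rewrite degSE; apply: eq_bigl => e; rewrite incidY.
Qed.

Lemma adjS_sym S : symmetric (adjS S).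
Proof.
by move=> u v; apply/existsP/existsP => -[e /andP[eS je]]; exists e; rewrite eS joinsC.
Qed.

Lemma connect_adjS1 S e u v : e \in S -> joins e u v -> connect (adjS S) u v.
Proof. by move=> eS je; apply/connect1/existsP; exists e; rewrite eS. Qed.

Lemma connectedS_subset S S' : S \subset S' -> connectedS S -> connectedS S'.
Proof.
move=> sSS' cS u v; apply: connect_sub (cS u v) => {}u {}v /existsP[e /andP[eS je]].
exact: connect_adjS1 (subsetP sSS' e eS) je.
Qed.

Lemma connectedS_root S r : (forall u, connect (adjS S) u r) -> connectedS S.
Proof.
move=> toS u v; apply: connect_trans (toS u) _.
by rewrite (sym_connect_sym (@adjS_sym S)).
Qed.

(* Cut a path from u to the X-end of d at its first use of d. *)
Lemma connectedS_setD1 S d : connectedS S -> forall u,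
  connect (adjS (S :\ d)) u (inl (bex d)) \/ connect (adjS (S :\ d)) u (inr (bey d)).
Proof.
move=> cS u; have /connectP[p pS lastp] := cS u (inl (bex d)).
elim: p u pS lastp => [|w p IH] u /=; first by move=> _ ->; left.
case/andP => /existsP[e /andP[eS je]] pw /(IH _ pw) wd.
case: (eqVneq e d) je => [-> | ned] je.
  by case/orP: je => /andP[]; [move=> /eqP<- _; left | move=> _ /eqP<-; right].
have uw : connect (adjS (S :\ d)) u w by apply: connect_adjS1 je; rewrite !inE ned.
by case: wd => wd; [left | right]; apply: connect_trans uw wd.
Qed.

End Incidence.

Definition vmap (G H : bigraph) (fX : bX G -> bX H) (fY : bY G -> bY H) (v : vtx G) : vtx H :=
  match v with inl x => inl (fX x) | inr y => inr (fY y) end.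

Definition maps_ends (G H : bigraph) (fX : bX G -> bX H) (fY : bY G -> bY H)
    (g : bE G -> bE H) (e : bE G) : Prop :=
  bex (g e) = fX (bex e) /\ bey (g e) = fY (bey e).

(* [P7_factor F] unfolds to [forall v, P7_component F v]. *)
Definition P7_component (G : bigraph) (F : {set bE G}) (v : vtx G) : Prop :=
  exists (p : 7.-tuple (vtx G)) (f : 'I_6 -> bE G),
    [/\ uniq p, v \in p, injective f,
        (forall i : 'I_6, f i \in F /\
           joins (f i) (tnth p (widen_ord (leqnSn 6) i)) (tnth p (lift ord0 i)))
      & (forall e, e \in F -> has (incid e) p -> exists i, e = f i)].

Section VertexMap.
Variables (G H : bigraph) (fX : bX G -> bX H) (fY : bY G -> bY H) (g : bE G -> bE H).
Hypotheses (fX_inj : injective fX) (fY_inj : injective fY).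
Local Notation f := (vmap fX fY).
Local Notation maps_ends := (maps_ends fX fY g).

Lemma vmap_inj : injective f.
Proof. by case=> [x|y] [x'|y'] //= -[]; [move/fX_inj-> | move/fY_inj->]. Qed.

Lemma incid_vmap e w : maps_ends e -> incid (g e) (f w) = incid e w.
Proof.
case=> ex ey; rewrite /incid ex ey -[inl (fX _)]/(f (inl _)) -[inr (fY _)]/(f (inr _)).
by rewrite !(inj_eq vmap_inj).
Qed.

Lemma joins_vmap e u v : maps_ends e -> joins (g e) (f u) (f v) = joins e u v.
Proof.
case=> ex ey; rewrite /joins ex ey -[inl (fX _)]/(f (inl _)) -[inr (fY _)]/(f (inr _)).
by rewrite !(inj_eq vmap_inj).
Qed.

Lemma connect_vmap (T : {set bE G}) (T' : {set bE H}) :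
    {in T, forall e, g e \in T' /\ maps_ends e} ->
  forall u v, connect (adjS T) u v -> connect (adjS T') (f u) (f v).
Proof.
move=> gT u v /connectP[p pT ->]; elim: p u pT => [|w p IH] u //=.
case/andP => /existsP[e /andP[eT je]] /IH; apply: connect_trans.
have [geT ge] := gT e eT; by apply: connect_adjS1 geT _; rewrite joins_vmap.
Qed.

Lemma connectedS_vmap (T : {set bE G}) (T' : {set bE H}) :
    (forall w, exists u, w = f u) -> {in T, forall e, g e \in T' /\ maps_ends e} ->
  connectedS T -> connectedS T'.
Proof.
move=> f_onto gT cT w w'; have [u ->] := f_onto w; have [u' ->] := f_onto w'.
exact: connect_vmap gT _ _ (cT u u').
Qed.

Lemma degS_vmap (S : {set bE G}) w :
  injective g -> {in S, forall e, maps_ends e} -> degS (g @: S) (f w) = degS S w.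
Proof.
move=> g_inj gS; rewrite /degS -(card_imset _ g_inj); apply: eq_card => d.
rewrite inE; apply/andP/imsetP => [[/imsetP[e eS ->] inc] | [e]].
  by exists e => //; rewrite inE eS -(incid_vmap w (gS e eS)).
by rewrite inE => /andP[eS inc] ->; rewrite imset_f // (incid_vmap w (gS e eS)).
Qed.

Lemma P7_component_vmap (FG : {set bE G}) (FH : {set bE H}) u :
    injective g -> {in FG, forall e, g e \in FH /\ maps_ends e} ->
    (forall d w, d \in FH -> incid d (f w) -> exists2 e, e \in FG & d = g e) ->
  P7_component FG u -> P7_component FH (f u).
Proof.
move=> g_inj gF FH_img [p [h [p_uniq up h_inj hF h_cover]]].
exists (map_tuple f p), (g \o h); split.
- by rewrite map_inj_uniq //; apply: vmap_inj.
- exact: map_f.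
- exact: inj_comp.
- move=> i; have [hiF hij] := hF i; have [ghiF ghi] := gF _ hiF.
  by rewrite !tnth_map joins_vmap.
- move=> d dF; rewrite has_map => /hasP[w wp /= dw].
  have [e eF de] := FH_img d w dF dw; have [_ ge] := gF e eF.
  rewrite de incid_vmap // in dw.
  have [|i ei] := h_cover e eF; first by apply/hasP; exists w.
  by exists i; rewrite de ei.
Qed.

End VertexMap.

Section Glue.
Variables (G1 G2 : bigraph) (e1 : bE G1) (e2 : bE G2).
Local Notation G := (glue e1 e2).
Local Notation emb1 := (@vmap G1 G inl inl).
Local Notation emb2 := (@vmap G2 G inr inr).

Lemma maps_ends1 e : e != e1 -> maps_ends (H := G) inl inl inl e.
Proof. by move=> /negbTE ne; rewrite /maps_ends /= ne. Qed.

Lemma maps_ends2 e : e != e2 -> maps_ends (H := G) inr inr inr e.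
Proof. by move=> /negbTE ne; rewrite /maps_ends /= ne. Qed.

Lemma incid_emb1 e w : e != e1 -> incid (G := G) (inl e) (emb1 w) = incid e w.
Proof. by move=> /maps_ends1; apply: (@incid_vmap G1 G inl inl inl inl_inj inl_inj). Qed.

Lemma incid_inr_emb1 e w : e != e2 -> incid (G := G) (inr e) (emb1 w) = false.
Proof. by move=> /negbTE ne; rewrite /incid /= ne; case: w. Qed.

Lemma incid_inl_emb2 e w : e != e1 -> incid (G := G) (inl e) (emb2 w) = false.
Proof. by move=> /negbTE ne; rewrite /incid /= ne; case: w. Qed.

Lemma joins_glue_e1 : joins (G := G) (inl e1) (emb1 (inl (bex e1))) (emb2 (inr (bey e2))).
Proof. by rewrite /joins /= !eqxx. Qed.

Lemma joins_glue_e2 : joins (G := G) (inr e2) (emb2 (inl (bex e2))) (emb1 (inr (bey e1))).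
Proof. by rewrite /joins /= !eqxx. Qed.

Lemma vtx_glueP (v : vtx G) : (exists u, v = emb1 u) \/ (exists u, v = emb2 u).
Proof.
by case: v => [[x|x]|[y|y]]; [left; exists (inl x) | right; exists (inl x)
                             | left; exists (inr y) | right; exists (inr y)].
Qed.

Lemma degS_emb1X (S : {set bE G}) x :
  degS S (emb1 (inl x)) = degS [set e | inl e \in S] (inl x).
Proof.
rewrite !degS_sum big_sumType /= [X in _ + X]big1 ?addn0 => [|e _].
  by apply: eq_bigr => e _; rewrite inE /incid /= !orbF.
by rewrite /incid andbF.
Qed.

(* Stated additively to avoid truncated subtraction: at b1 the edge e1 is traded for e2'. *)
Lemma degS_emb1Y (S : {set bE G}) y :
  degS S (emb1 (inr y)) + ((inl e1 \in S) && (bey e1 == y)) =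
  degS [set e | inl e \in S] (inr y) + ((inr e2 \in S) && (bey e1 == y)).
Proof.
have e1_y : incid (G := G) (inl e1) (emb1 (inr y)) = false by rewrite /incid /= eqxx.
have e2_y : incid (G := G) (inr e2) (emb1 (inr y)) = (bey e1 == y).
  by rewrite /incid /= eqxx.
rewrite !degS_sum big_sumType (bigD1 e1) // [in RHS](bigD1 e1) // (bigD1 e2) //.
rewrite [\sum_(e | true && (e != e2)) _]big1 => [|e /andP[_ ne2]]; last first.
  by rewrite incid_inr_emb1 ?andbF.
under eq_bigr => e /andP[_ ne1] do rewrite incid_emb1 //.
under [in RHS]eq_bigr do rewrite inE.
rewrite e1_y e2_y inE incidY andbF /=; lia.
Qed.

Lemma deg_emb1 v : deg (G := G) (emb1 v) = deg v.
Proof.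
have S1T : [set e | inl e \in [set: bE G]] = [set: bE G1] by apply/setP => e; rewrite !inE.
case: v => [x|y]; first by rewrite /deg degS_emb1X S1T.
by have := degS_emb1Y [set: bE G] y; rewrite S1T !inE /=; apply: addIn.
Qed.

Lemma full_3reg_glue1 : has_full_3reg_subgraph G -> has_full_3reg_subgraph G1.
Proof.
move=> [W [S [SW W3 YW]]].
pose W1 := [set u | emb1 u \in W]; pose S1 := [set e | inl e \in S].
have degX x : degS S1 (inl x) = if inl x \in W1 then 3 else 0.
  rewrite inE; case: ifPn => xW; first by rewrite -degS_emb1X W3.
  rewrite degS_sum big1 // => e _; rewrite incidX inE.
  case: andP => // -[eS /eqP ex]; case/negP: xW; rewrite -ex; exact: (SW _ eS).1.
have degY y : degS S1 (inr y) + ((inr e2 \in S) && (bey e1 == y)) =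
              3 + ((inl e1 \in S) && (bey e1 == y)).
  by rewrite -degS_emb1Y W3 //; apply: YW.
have S1_3 : 3 %| #|S1|.
  by rewrite -sum_degSX; apply: dvdn_sum => x _; rewrite degX; case: ifP.
have S1_Y : #|S1| + (inr e2 \in S) = 3 * #|bY G1| + (inl e1 \in S).
  rewrite -sum_degSY -(sum_andb_eq (inr e2 \in S) (bey e1)) -big_split /=.
  under eq_bigr do rewrite degY.
  by rewrite big_split /= sum_andb_eq sum_nat_const mulnC.
have e1e2 : (inl e1 \in S) = (inr e2 \in S).
  by move: S1_3 S1_Y; case: (inl e1 \in S); case: (inr e2 \in S) => //=; lia.
exists W1, S1; split.
- by move=> e; rewrite !inE => /SW[xW _]; split=> //; apply: YW.
- case=> [x|y] vW; first by rewrite degX vW.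
  by apply: (@addIn ((inr e2 \in S) && (bey e1 == y))); rewrite degY e1e2.
- by move=> y; rewrite inE; apply: YW.
Qed.

Definition glue_factor (F1 : {set bE G1}) (F2 : {set bE G2}) : {set bE G} :=
  [set d | match d with inl e => e \in F1 | inr e => e \in F2 end].

Lemma glue_P7_factor F1 F2 : P7_factor F1 -> e1 \notin F1 -> P7_factor F2 -> e2 \notin F2 ->
  P7_factor (glue_factor F1 F2).
Proof.
move=> P1 e1F1 P2 e2F2 v.
have ne1 e : e \in F1 -> e != e1 by apply: contraTneq => ->.
have ne2 e : e \in F2 -> e != e2 by apply: contraTneq => ->.
case: (vtx_glueP v) => [[u ->] | [u ->]].
- apply: (@P7_component_vmap G1 G inl inl inl inl_inj inl_inj _ _ _ inl_inj) (P1 u).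
  + by move=> e eF; rewrite inE eF; split=> //; apply/maps_ends1/ne1.
  + by move=> [e|e] w; rewrite inE => eF; [exists e | rewrite incid_inr_emb1 ?ne2].
- apply: (@P7_component_vmap G2 G inr inr inr inr_inj inr_inj _ _ _ inr_inj) (P2 u).
  + by move=> e eF; rewrite inE eF; split=> //; apply/maps_ends2/ne2.
  + by move=> [e|e] w; rewrite inE => eF; [rewrite incid_inl_emb2 ?ne1 | exists e].
Qed.

Lemma glue_connectedS_setD1_inl e :
  two_edge_connected G1 -> two_edge_connected G2 -> connectedS ([set: bE G] :\ inl e).
Proof.
move=> [_ c1] [_ c2]; set T := _ :\ _; pose r := emb2 (inl (bex e2)).
have emb1_connect (T1 : {set bE G1}) : {in T1, forall e', e' != e /\ e' != e1} ->
    forall u v, connect (adjS T1) u v -> connect (adjS T) (emb1 u) (emb1 v).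
  move=> T1e; apply: (@connect_vmap G1 G inl inl inl inl_inj inl_inj).
  by move=> e' /T1e[ne ne1]; rewrite !inE (inj_eq inl_inj) ne; split=> //; apply: maps_ends1.
have emb2_to_r u : connect (adjS T) (emb2 u) r.
  apply: (@connect_vmap G2 G inr inr inr inr_inj inr_inj) (c2 e2 u (inl (bex e2))).
  by move=> e'; rewrite !inE andbT => ne2; split=> //; apply: maps_ends2.
have b1_to_r : connect (adjS T) (emb1 (inr (bey e1))) r.
  by apply: (connect_adjS1 (e := inr e2 : bE G)); rewrite ?inE // joinsC joins_glue_e2.
have a1_to_r : connect (adjS T) (emb1 (inl (bex e1))) r.
  case: (eqVneq e e1) => [ee1 | ne].
    apply: connect_trans b1_to_r; apply: emb1_connect (c1 e1 _ _) => e'.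
    by rewrite !inE andbT ee1 => ->.
  apply: connect_trans (emb2_to_r (inr (bey e2))).
  by apply: connect_adjS1 joins_glue_e1; rewrite !inE (inj_eq inl_inj) eq_sym ne.
apply: (connectedS_root (r := r)) => v.
case: (vtx_glueP v) => [[u ->] | [u ->]]; last exact: emb2_to_r.
have T1e : {in [set: bE G1] :\ e :\ e1, forall e', e' != e /\ e' != e1}.
  by move=> e'; rewrite !inE andbT => /andP[-> ->].
by case: (connectedS_setD1 e1 (c1 e) u) => /(emb1_connect _ T1e) ur; apply: connect_trans ur _.
Qed.

End Glue.

Definition sumC {A B : Type} (s : A + B) : B + A :=
  match s with inl a => inr a | inr b => inl b end.

Lemma sumCK {A B : Type} : cancel (@sumC A B) (@sumC B A).
Proof. by case. Qed.

Lemma sumC_inj {A B : Type} : injective (@sumC A B).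
Proof. exact: can_inj sumCK. Qed.

Section GlueSwap.
Variables (G1 G2 : bigraph) (e1 : bE G1) (e2 : bE G2).
Local Notation G := (glue e1 e2).
Local Notation G' := (glue e2 e1).
Local Notation swapv := (@vmap G' G sumC sumC).

Lemma maps_ends_swap (d : bE G') : maps_ends (G := G') (H := G) sumC sumC sumC d.
Proof. by case: d => d; rewrite /maps_ends /=; case: ifP. Qed.

Lemma swapv_onto (w : vtx G) : exists u, w = swapv u.
Proof. by exists (@vmap G G' sumC sumC w); case: w => [[]|[]]. Qed.

Lemma deg_emb2 v : deg (G := G) (@vmap G2 G inr inr v) = deg v.
Proof.
have -> : @vmap G2 G inr inr v = swapv (@vmap G2 G' inl inl v) by case: v.
have setT_swap : [set: bE G] = sumC @: [set: bE G'].
  by apply/setP => d; rewrite in_setT; apply/esym/imsetP; exists (sumC d); rewrite ?sumCK.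
rewrite /deg setT_swap (@degS_vmap G' G sumC sumC sumC); first exact: deg_emb1.
all: by [exact: sumC_inj | move=> d _; apply: maps_ends_swap].
Qed.

Lemma glue_connectedS_setD1 d :
  two_edge_connected G1 -> two_edge_connected G2 -> connectedS ([set: bE G] :\ d).
Proof.
move=> c1 c2; case: d => e; first exact: glue_connectedS_setD1_inl.
apply: (@connectedS_vmap G' G sumC sumC sumC sumC_inj sumC_inj _ _ swapv_onto);
  last exact: (@glue_connectedS_setD1_inl G2 G1 e2 e1 e c2 c1).
move=> d; rewrite !inE andbT => ne; split; last exact: maps_ends_swap.
by rewrite andbT -[inr e]/(sumC (inl e : bE G')) (inj_eq sumC_inj).
Qed.

Lemma glue_biregular34 : biregular34 G1 -> biregular34 G2 -> biregular34 G.
Proof.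
move=> [X1 Y1] [X2 Y2]; split=> [[x|x] | [y|y]].
- exact: etrans (deg_emb1 e1 e2 (inl x)) (X1 x).
- exact: etrans (deg_emb2 (inl x)) (X2 x).
- exact: etrans (deg_emb1 e1 e2 (inr y)) (Y1 y).
- exact: etrans (deg_emb2 (inr y)) (Y2 y).
Qed.

Lemma glue_two_edge_connected :
  two_edge_connected G1 -> two_edge_connected G2 -> two_edge_connected G.
Proof.
move=> c1 c2; split=> [|d]; last exact: glue_connectedS_setD1.
exact: connectedS_subset (subsetDl _ _) (glue_connectedS_setD1 (inl e1) c1 c2).
Qed.

End GlueSwap.

Theorem mainTheorem3 (G1 G2 : bigraph) (F1 : {set bE G1}) (F2 : {set bE G2})
    (e1 : bE G1) (e2 : bE G2) :
  two_edge_connected G1 -> biregular34 G1 -> P7_factor F1 -> e1 \notin F1 ->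
  two_edge_connected G2 -> biregular34 G2 -> P7_factor F2 -> e2 \notin F2 ->
  ~ has_full_3reg_subgraph G1 ->
  [/\ two_edge_connected (glue e1 e2), biregular34 (glue e1 e2),
      has_P7_factor (glue e1 e2) & ~ has_full_3reg_subgraph (glue e1 e2)].
Proof.
move=> c1 b1 P1 e1F1 c2 b2 P2 e2F2 no_full1; split.
- exact: glue_two_edge_connected.
- exact: glue_biregular34.
- by exists (glue_factor e1 e2 F1 F2); apply: glue_P7_factor.
- by move/full_3reg_glue1.
Qed.
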